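(* Let $\mathcal F$ be a saturated fusion system on a finite $p$-group $S$, and let $Q\trianglelefteq P\le S$ with $P$ fully $\mathcal F$-normalized and $C_S(\xi(Q))\le P$ for all $\xi\in\operatorname{Aut}_\mathcal F(P)$. Then $Q$ is fully $\mathcal F$-centralized.
   Context: Fusion systems: Let $S$ be a finite $p$-group. A fusion system $\mathcal F$ on $S$ is a category whose objects are the subgroups of $S$ and whose morphism sets $\operatorname{Hom}_\mathcal F(P,Q)$ are sets of injective group homomorphisms $P\to Q$, such that (i) every conjugation map $x\mapsto gxg^{-1}$, $g\in S$, from $P$ to $Q$ lies in $\operatorname{Hom}_\mathcal F(P,Q)$, and (ii) every $\varphi\in\operatorname{Hom}_\mathcal F(P,Q)$ factors as an isomorphism $P\to\varphi(P)$ in $\mathcal F$ with inverse in $\mathcal F$ followed by inclusion. $Q$ is fully $\mathcal F$-normalized (resp. centralized) if $|N_S(Q)|$ (resp. $|C_S(Q)|$) is maximal among $\mathcal F$-conjugates of $Q$. For $\varphi\in\operatorname{Hom}_\mathcal F(Q,S)$, $N_\varphi=\{g\in N_S(Q):\varphi c_g|_Q\varphi^{-1}\in\operatorname{Aut}_S(\varphi(Q))\}$, $\operatorname{Aut}_S(\cdot)$ denoting automorphisms induced by conjugation by elements of $S$. $\mathcal F$ is saturated if every fully normalized $Q$ is fully centralized with $\operatorname{Aut}_S(Q)$ a Sylow $p$-subgroup of $\operatorname{Aut}_\mathcal F(Q)$, and every $\varphi\in\operatorname{Hom}_\mathcal F(Q,S)$ with $\varphi(Q)$ fully centralized extends to a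 morphism of $\mathcal F$ defined on $N_\varphi$. *)

From HB Require Import structures.
From mathcomp Require Import all_boot all_fingroup all_solvable.
Set Implicit Arguments. Unset Strict Implicit. Unset Printing Implicit Defensive.
Import GroupScope.
Local Open Scope group_scope.

Section FusionDefs.
Variable gT : finGroupType.

(* A fusion system on S is given by its hom-sets:
   F P Q f  <=>  f (restricted to P) lies in Hom_F(P,Q).
   Morphisms are represented by finite functions gT -> gT; only their
   values on the source P matter (axiom fs_ext). *)
Definition fhoms := {set gT} -> {set gT} -> {ffun gT -> gT} -> bool.

Definition inj_hom (P Q : {set gT}) (f : {ffun gT -> gT}) : Prop :=
  [/\ {in P &, forall x y, f (x * y) = f x * f y},
      {in P &, injective f} & f @: P \subset Q].

(* conjugation map c_g : x |-> g x g^-1  (MathComp: x ^ y = y^-1 x y) *)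
Definition cmap (g : gT) : {ffun gT -> gT} := [ffun x => x ^ g^-1].

Definition fusion_system (S : {set gT}) (F : fhoms) : Prop :=
  [/\
      (forall P Q f, F P Q f ->
         [/\ group_set P, group_set Q, P \subset S, Q \subset S & inj_hom P Q f]),
      (forall (P Q : {group gT}) (f h : {ffun gT -> gT}), F P Q f -> {in P, f =1 h} -> F P Q h),
      (forall (P Q : {group gT}) g, P \subset S -> Q \subset S -> g \in S ->
         P :^ g^-1 \subset Q -> F P Q (cmap g)),
      (forall P Q R f h, F P Q f -> F Q R h -> F P R [ffun x => h (f x)]) &
      (* (ii) factorization as an F-isomorphism followed by an inclusion *)
      (forall P Q f, F P Q f ->
         F P (f @: P) f /\
         exists h : {ffun gT -> gT}, [/\ F (f @: P) P h, {in P, forall x, h (f x) = x}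
                     & {in f @: P, forall y, f (h y) = y}])].

Definition fully_normalized (S : {set gT}) (F : fhoms) (Q : {set gT}) : Prop :=
  forall f, F Q S f -> #|'N_S(f @: Q)| <= #|'N_S(Q)|.

Definition fully_centralized (S : {set gT}) (F : fhoms) (Q : {set gT}) : Prop :=
  forall f, F Q S f -> #|'C_S(f @: Q)| <= #|'C_S(Q)|.

(* Aut_F(Q), as permutations of gT fixing everything outside Q *)
Definition AutF (F : fhoms) (Q : {set gT}) : {set {perm gT}} :=
  [set a in Aut Q | F Q Q [ffun x => a x]].

Definition AutS (S Q : {set gT}) : {set {perm gT}} :=
  [set a in Aut Q | [exists g in 'N_S(Q), [forall x in Q, a x == x ^ g^-1]]].

Definition Nphi (S Q : {set gT}) (f : {ffun gT -> gT}) : {set gT} :=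
  [set g in 'N_S(Q) | [exists h in 'N_S(f @: Q),
     [forall x in Q, f (x ^ g^-1) == (f x) ^ h^-1]]].

Definition saturated (p : nat) (S : {set gT}) (F : fhoms) : Prop :=
  [/\ fusion_system S F,
      (forall Q : {group gT}, Q \subset S -> fully_normalized S F Q ->
         fully_centralized S F Q /\ p.-Sylow(AutF F Q) (AutS S Q)) &
      (forall (Q : {group gT}) f, F Q S f -> fully_centralized S F (f @: Q) ->
         exists h : {ffun gT -> gT}, F (Nphi S Q f) S h /\ {in Q, h =1 f})].

End FusionDefs.

From mathcomp Require Import all_boot all_fingroup all_solvable.
Set Implicit Arguments. Unset Strict Implicit. Unset Printing Implicit Defensive.
Import GroupScope.

(* Let R be a fully normalized F-conjugate of Q; by saturation R is fully
   centralized, so it suffices to show |C_S(R)| <= |C_S(Q)|.  The main tool is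
   the extension lemma: if R is fully normalized and phi : X -> R is an
   F-isomorphism, then for every subgroup N of N_S(X) some a o phi, with
   a in Aut_F(R), extends to an F-morphism on N.  (Transporting N into
   Aut_F(R) gives a p-subgroup, which Sylow's theorem conjugates into
   Aut_S(R); the extension axiom then applies.)  Applied to Q -> R and N = P
   it yields chi1 : P -> S with chi1(Q) = R; applied to chi1^-1 : P' -> P,
   where P' = chi1(P), and N = N_S(P') it yields chi extending b o chi1^-1
   with b in Aut_F(P).  Nilpotence of S and the hypothesis on Aut_F(P) force
   C_S(R) <= P', so chi1^-1 embeds C_S(R) into C_S(Q). *)

(* A subgroup H of a nilpotent group that normalizes, but does not contain,
   a subgroup C is normalized by some element of C outside H: the normalizer
   of H grows inside the nilpotent group C H. *)
Lemma nil_normalizer_escape (gT : finGroupType) (G C H : {group gT}) :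
  nilpotent G -> C \subset G -> H \subset G -> H \subset 'N(C) ->
  ~~ (C \subset H) -> exists2 c, c \in 'N_C(H) & c \notin H.
Proof.
move=> nilG sCG sHG nCH notsCH.
have sCHG : C <*> H \subset G by rewrite join_subG sCG.
have ltHCH : H \proper C <*> H.
  rewrite properEneq joing_subr andbT.
  by apply: contraNneq notsCH => ->; rewrite joing_subl.
have [_ [u /setIP[CHu nHu] notHu]] :=
  properP (nilpotent_proper_norm (nilpotentS sCHG nilG) ltHCH).
move: CHu; rewrite /= norm_joinEr // => /mulsgP[c y Cc Hy def_u].
have def_c : c = u * y^-1 by rewrite def_u mulgK.
exists c; last by apply: contra notHu; rewrite def_u => Hc; rewrite groupM.
by rewrite inE Cc def_c groupM // groupV (subsetP (normG H)).
Qed.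

Section ImageFacts.
Variable gT : finGroupType.
Implicit Types (A : {set gT}) (f h : gT -> gT).

Lemma imset_comp_ffun f h A : [ffun x => h (f x)] @: A = h @: (f @: A).
Proof. by rewrite -imset_comp; apply: eq_imset => x; rewrite ffunE. Qed.

Lemma imset_inv f h A : {in A, forall x, h (f x) = x} -> h @: (f @: A) = A.
Proof. by move=> hK; rewrite -imset_comp (eq_in_imset hK) imset_id. Qed.

Lemma Aut_imset (R : {set gT}) (a : {perm gT}) : a \in Aut R -> a @: R = R.
Proof. by case/setIdP=> /im_perm_on. Qed.

(* Conjugation by 1 is the identity, so inclusions are represented by cmap 1. *)
Lemma cmap1 (x : gT) : cmap 1 x = x.
Proof. by rewrite ffunE invg1 conjg1. Qed.

End ImageFacts.

Definition perm_of_fun (T : finType) (f : T -> T) : {perm T} :=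
  if injectiveP f is ReflectT inj_f then perm inj_f else 1.

Lemma perm_of_funE (T : finType) (f : T -> T) : injective f -> perm_of_fun f =1 f.
Proof. by rewrite /perm_of_fun; case: injectiveP => // inj_f _ x; rewrite permE. Qed.

Lemma AutS_group (gT : finGroupType) (S R : {group gT}) : group_set (AutS S R).
Proof.
apply/group_setP; split.
  apply/setIdP; split; first exact: group1.
  apply/exists_inP; exists 1; first by rewrite group1.
  by apply/forall_inP => x _; rewrite perm1 invg1 conjg1.
move=> a b /setIdP[Aa /exists_inP[g NRg /forall_inP aE]].
move=> /setIdP[Ab /exists_inP[h NRh /forall_inP bE]].
apply/setIdP; split; first exact: groupM.
apply/exists_inP; exists (h * g); first by rewrite groupM.
apply/forall_inP => x Rx; rewrite permM (eqP (aE x Rx)) (eqP (bE _ _)).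
  by rewrite invMg conjgM.
by rewrite memJ_norm ?groupV //; case/setIP: NRg.
Qed.

Section FusionSystem.
Variables (gT : finGroupType) (S : {group gT}) (F : fhoms gT).
Hypothesis FS : fusion_system S F.
Implicit Types (A B C : {set gT}) (f h : {ffun gT -> gT}).

Lemma fs_hom A B f : F A B f ->
  [/\ group_set A, group_set B, A \subset S, B \subset S & inj_hom A B f].
Proof. by case: FS => hom _ _ _ _; apply: hom. Qed.

Lemma fs_ext A B f h : F A B f -> {in A, f =1 h} -> F A B h.
Proof.
move=> Ff fh; have [gA gB _ _ _] := fs_hom Ff.
by case: FS => _ ext _ _ _; apply: (ext (Group gA) (Group gB) f).
Qed.

Lemma fs_conj (A B : {group gT}) g : A \subset S -> B \subset S -> g \in S ->
  A :^ g^-1 \subset B -> F A B (cmap g).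
Proof. by case: FS => _ _ conj _ _; apply: conj. Qed.

Lemma fs_comp A B C f h : F A B f -> F B C h -> F A C [ffun x => h (f x)].
Proof. by case: FS => _ _ _ comp _; apply: comp. Qed.

Lemma fs_iso A B f : F A B f ->
  F A (f @: A) f /\ exists h, [/\ F (f @: A) A h,
    {in A, forall x, h (f x) = x} & {in f @: A, forall y, f (h y) = y}].
Proof. by case: FS => _ _ _ _ iso; apply: iso. Qed.

Lemma fs_mem A B f x : F A B f -> x \in A -> f x \in B.
Proof. by case/fs_hom=> _ _ _ _ [_ _ /subsetP sfB] Ax; apply/sfB/imset_f. Qed.

Lemma fs_morph A B f : F A B f -> {in A &, {morph f : x y / x * y}}.
Proof. by case/fs_hom=> _ _ _ _ []. Qed.

Lemma fs_inj A B f : F A B f -> {in A &, injective f}.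
Proof. by case/fs_hom=> _ _ _ _ []. Qed.

Lemma fs_image_group A B f : F A B f -> group_set (f @: A).
Proof. by case/fs_iso=> /fs_hom[]. Qed.

Lemma fs_image_onto A B f h : F A B f -> F B A h -> {in B, forall y, f (h y) = y} ->
  f @: A = B.
Proof.
move=> Ff Fh fK; have [_ _ _ _ [_ _ sfAB]] := fs_hom Ff.
apply/eqP; rewrite eqEsubset sfAB; apply/subsetP => y By.
by rewrite -(fK y By) imset_f // (fs_mem Fh).
Qed.

Lemma fs_incl (A B : {group gT}) : A \subset B -> B \subset S -> F A B (cmap 1).
Proof.
move=> sAB sBS; apply: fs_conj => //; first exact: subset_trans sAB sBS.
by rewrite invg1 conjsg1.
Qed.

Lemma fs_target A B (C : {group gT}) f : F A B f -> B \subset C -> C \subset S ->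
  F A C f.
Proof.
move=> Ff sBC sCS; have [_ gB _ _ _] := fs_hom Ff.
apply: fs_ext (fs_comp Ff (fs_incl (A := Group gB) sBC sCS)) _.
by move=> x _; rewrite ffunE cmap1.
Qed.

Lemma fs_source (A' : {group gT}) A B f : F A B f -> A' \subset A -> F A' B f.
Proof.
move=> Ff sA'A; have [gA _ sAS _ _] := fs_hom Ff.
apply: fs_ext (fs_comp (fs_incl (B := Group gA) sA'A sAS) Ff) _.
by move=> x _; rewrite ffunE cmap1.
Qed.

Lemma AutF_group (R : {group gT}) : R \subset S -> group_set (AutF F R).
Proof.
move=> sRS; apply/group_setP; split.
  apply/setIdP; split; first exact: group1.
  by apply: fs_ext (fs_incl (subxx R) sRS) _ => x _; rewrite !ffunE perm1 invg1 conjg1.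
move=> a b /setIdP[Aa Fa] /setIdP[Ab Fb]; apply/setIdP; split; first exact: groupM.
by apply: fs_ext (fs_comp Fa Fb) _ => x _; rewrite !ffunE permM.
Qed.

(* Every subgroup has a fully normalized F-conjugate: take one whose
   normalizer in S is as large as possible. *)
Lemma exists_fully_normalized_conj (X : {group gT}) : X \subset S ->
  exists R : {group gT}, [/\ R \subset S, fully_normalized S F R
                           & exists2 f, F X S f & f @: X = R].
Proof.
move=> sXS; have FX := fs_target (fs_incl (subxx X) sXS) sXS (subxx S).
have [f Ff maxf] := arg_maxnP (fun f => #|'N_S(f @: X)|) FX.
have [FfX _] := fs_iso Ff; have [_ _ _ sRS _] := fs_hom FfX.
exists (Group (fs_image_group Ff)); split => //; last by exists f.
by move=> g Fg; have := maxf _ (fs_comp FfX Fg); rewrite imset_comp_ffun.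
Qed.

Lemma fully_centralized_conj Q R f0 :
  fully_centralized S F R -> F Q S f0 -> f0 @: Q = R ->
  #|'C_S(R)| <= #|'C_S(Q)| -> fully_centralized S F Q.
Proof.
move=> fcR Ff0 defR leRQ f Ff; subst R; apply: leq_trans leRQ.
have [_ [h [Fh hK _]]] := fs_iso Ff0.
by have := fcR _ (fs_comp Fh Ff); rewrite imset_comp_ffun (imset_inv hK).
Qed.

Lemma card_cent_image (A R : {group gT}) f : F A S f -> R \subset A ->
  'C_S(R) \subset A -> #|'C_S(R)| <= #|'C_S(f @: R)|.
Proof.
move=> Ff sRA sCA; pose m := Morphism (fs_morph Ff).
rewrite -(card_in_imset (sub_in2 (subsetP sCA) (fs_inj Ff))).
apply: subset_leq_card; rewrite subsetI; apply/andP; split.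
  by apply/subsetP => _ /imsetP[x Cx ->]; apply: fs_mem Ff (subsetP sCA x Cx).
by have := morphim_cents m (subsetIr S 'C(R)); rewrite !morphimEsub.
Qed.

(* Transport of conjugation: an F-isomorphism phi : X -> R with inverse psi
   turns each g in N_S(X) into the F-automorphism phi o c_g o psi of R
   (extended by the identity outside R), and this is a homomorphism
   N_S(X) -> Aut_F(R). *)
Section Transport.
Variables (X R : {group gT}) (phi psi : {ffun gT -> gT}).
Hypotheses (Fphi : F X R phi) (Fpsi : F R X psi).
Hypotheses (psiK : {in X, forall x, psi (phi x) = x})
           (phiK : {in R, forall y, phi (psi y) = y}).

Definition transport_fun (g y : gT) : gT :=
  if y \in R then phi (psi y ^ g) else y.

Definition transport (g : gT) : {perm gT} := perm_of_fun (transport_fun g).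

Lemma transport_fun_inj g : g \in 'N(X) -> injective (transport_fun g).
Proof.
move=> nXg y z; rewrite /transport_fun.
have XJ u : u \in R -> psi u ^ g \in X by move=> Ru; rewrite memJ_norm ?(fs_mem Fpsi).
case: ifP => Ry; case: ifP => Rz.
- move/(fs_inj Fphi (XJ y Ry) (XJ z Rz))/conjg_inj => psi_yz.
  by rewrite -(phiK Ry) -(phiK Rz) psi_yz.
- by move=> def_z; rewrite -def_z (fs_mem Fphi (XJ y Ry)) in Rz.
- by move=> def_y; rewrite def_y (fs_mem Fphi (XJ z Rz)) in Ry.
- done.
Qed.

Lemma transportE g : g \in 'N(X) -> transport g =1 transport_fun g.
Proof. by move/transport_fun_inj/perm_of_funE. Qed.

Lemma transport_AutF g : g \in 'N_S(X) -> transport g \in AutF F R.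
Proof.
case/setIP=> Sg nXg; have tE := transportE nXg.
have XJ u : u \in R -> psi u ^ g \in X by move=> Ru; rewrite memJ_norm ?(fs_mem Fpsi).
have [_ _ sXS _ _] := fs_hom Fphi.
apply/setIdP; split.
  apply/setIdP; split.
    by apply/subsetP => y; rewrite inE tE /transport_fun; case: ifP; rewrite ?eqxx.
  apply/morphicP => y z Ry Rz; rewrite !tE /transport_fun Ry Rz groupM //.
  by rewrite (fs_morph Fpsi) // conjMg (fs_morph Fphi) ?XJ.
have FXX : F X X (cmap g^-1).
  by apply: fs_conj; rewrite ?groupV ?invgK ?(normP nXg).
apply: fs_ext (fs_comp (fs_comp Fpsi FXX) Fphi) _ => y Ry.
by rewrite !ffunE tE /transport_fun Ry invgK.
Qed.

Lemma transportM : {in 'N_S(X) &, {morph transport : g h / g * h}}.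
Proof.
move=> g h /setIP[_ nXg] /setIP[_ nXh]; apply/permP => y.
rewrite permM !transportE ?groupM // /transport_fun.
case: ifP => Ry; last by rewrite Ry.
have Xy : psi y ^ g \in X by rewrite memJ_norm ?(fs_mem Fpsi).
by rewrite (fs_mem Fphi Xy) psiK // conjgM.
Qed.

End Transport.

End FusionSystem.

Lemma saturated_fusion (gT : finGroupType) (p : nat) (S : {group gT}) (F : fhoms gT) :
  saturated p S F -> fusion_system S F.
Proof. by case. Qed.

Section Saturated.
Variables (gT : finGroupType) (p : nat) (S : {group gT}) (F : fhoms gT).
Hypotheses (pS : p.-group S) (satF : saturated p S F).
Let FS : fusion_system S F := saturated_fusion satF.

Lemma fully_normalized_centralized (R : {group gT}) :
  R \subset S -> fully_normalized S F R -> fully_centralized S F R.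
Proof. by case: satF => _ sat_norm _ sRS /(sat_norm R sRS)[]. Qed.

(* The transported image of N is a p-subgroup of Aut_F(R), hence lies in a
   conjugate of the Sylow subgroup Aut_S(R). *)
Lemma transport_into_AutS (X R N : {group gT}) phi psi :
  R \subset S -> fully_normalized S F R ->
  F X R phi -> F R X psi -> {in X, forall x, psi (phi x) = x} ->
  {in R, forall y, phi (psi y) = y} -> N \subset 'N_S(X) ->
  exists2 a, a \in AutF F R & N \subset Nphi S X [ffun x => a (phi x)].
Proof.
move=> sRS fnR Fphi Fpsi psiK phiK sNN.
have [_ sylAS] : fully_centralized S F R /\ p.-Sylow(AutF F R) (AutS S R).
  by case: satF => _ sat_norm _; apply: sat_norm.
pose AF := Group (AutF_group FS sRS); pose AS := Group (AutS_group S R).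
pose th := Morphism (transportM FS Fphi Fpsi psiK phiK).
have sthAF : th @* N \subset AF.
  by apply/subsetP => _ /morphimP[g NSg _ ->]; apply: (transport_AutF FS Fphi Fpsi).
have pthN : p.-group (th @* N).
  by apply/morphim_pgroup/(pgroupS _ pS)/(subset_trans sNN)/subsetIl.
have [a AFa sthNa] := Sylow_subJ (G := AF) (P := AS) sylAS sthAF pthN.
have AFai : a^-1 \in AF by rewrite groupV.
have Auta : a^-1 \in Aut R by case/setIdP: AFai.
exists a^-1 => //.
have im_aphi : [ffun x => a^-1 (phi x)] @: X = R.
  by rewrite imset_comp_ffun (fs_image_onto FS Fphi Fpsi phiK) Aut_imset.
apply/subsetP => g Ng; have NSg := subsetP sNN g Ng; have [_ nXg] := setIP NSg.
rewrite inE NSg /= im_aphi.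
have : th g^-1 \in AS :^ a by apply/(subsetP sthNa)/mem_morphim; rewrite ?groupV.
rewrite mem_conjg => /setIdP[_ /exists_inP[h NRh /forall_inP th_h]].
apply/exists_inP; exists h => //; apply/forall_inP => x Xx; rewrite !ffunE.
have Rphix : phi x \in R := fs_mem FS Fphi Xx.
have := th_h _ (Aut_closed Auta Rphix); rewrite conjgE !permM permK /=.
by rewrite (transportE FS Fphi Fpsi phiK) ?groupV // /transport_fun Rphix psiK.
Qed.

Lemma extension_to_normalizer (X R N : {group gT}) phi :
  fully_normalized S F R -> F X S phi -> phi @: X = R -> N \subset 'N_S(X) ->
  exists2 a, a \in AutF F R &
    exists chi, F N S chi /\ {in X, forall x, chi x = a (phi x)}.
Proof.
move=> fnR FphiS defR sNN.
have [FXR [psi [FRX psiK phiK]]] := fs_iso FS FphiS; rewrite defR in FXR FRX phiK.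
have [_ _ _ sRS _] := fs_hom FS FXR.
have [a AFa sNNa] := transport_into_AutS sRS fnR FXR FRX psiK phiK sNN.
have [Auta Fa] := setIdP AFa.
pose aphi := [ffun x => a (phi x)].
have FaphiR : F X R aphi.
  by apply: (fs_ext FS (fs_comp FS FXR Fa)) => x _; rewrite !ffunE.
have im_aphi : aphi @: X = R by rewrite imset_comp_ffun defR Aut_imset.
have fcR : fully_centralized S F (aphi @: X).
  by rewrite im_aphi; apply: fully_normalized_centralized.
case: satF => _ _ /(_ X aphi (fs_target FS FaphiR sRS (subxx S)) fcR)[chi [Fchi chiE]].
exists a => //; exists chi; split; first exact: (fs_source FS Fchi sNNa).
by move=> x Xx; rewrite chiE // ffunE.
Qed.

End Saturated.

(* Otherwise, S being nilpotent, some c in C_S(R) normalizes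
   P' without lying in it; chi(c) then centralizes chi(R) = b(Q), so it lies
   in P = chi(P'), contradicting the injectivity of chi. *)
Lemma cent_conj_sub_image (gT : finGroupType) (S P Q : {group gT}) (F : fhoms gT)
    (chi1 chi : {ffun gT -> gT}) (b : {perm gT}) :
  fusion_system S F -> nilpotent S -> Q <| P -> F P S chi1 -> b \in AutF F P ->
  F 'N_S(chi1 @: P) S chi -> {in P, forall x, chi (chi1 x) = b x} ->
  (forall xi, F P P xi -> 'C_S(xi @: Q) \subset P) ->
  'C_S(chi1 @: Q) \subset chi1 @: P.
Proof.
move=> FS nilS /andP[sQP nQP] Fchi1 /setIdP[Autb Fb] Fchi chiK centQ.
have [FchiP' _] := fs_iso FS Fchi1; have [_ gP' _ sP'S _] := fs_hom FS FchiP'.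
pose P' := Group gP'.
have sP'N : P' \subset 'N_S(P') by rewrite subsetI sP'S normG.
have nRP' : P' \subset 'N(chi1 @: Q).
  by have := morphim_norms (Morphism (fs_morph FS Fchi1)) nQP; rewrite !morphimEsub.
have nCP' : P' \subset 'N('C_S(chi1 @: Q)).
  by rewrite normsI ?norms_cent // (subset_trans sP'S) ?normG.
apply/idPn => /(nil_normalizer_escape (H := P') nilS (subsetIl _ _) sP'S nCP').
case=> c /setIP[/setIP[Sc cRc] nP'c] notP'c.
have NSc : c \in 'N_S(P') by rewrite inE Sc.
have chi_c_cent : chi c \in 'C_S([ffun x => b x] @: Q).
  rewrite inE (fs_mem FS Fchi NSc); apply/centP => _ /imsetP[q Qq ->].
  have Pq := subsetP sQP q Qq.
  have NSq : chi1 q \in 'N_S(P') := subsetP sP'N _ (imset_f _ Pq).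
  rewrite ffunE -(chiK q Pq) /commute -!(fs_morph FS Fchi) //.
  by rewrite (centP cRc _ (imset_f _ Qq)).
have := subsetP (centQ _ Fb) _ chi_c_cent; rewrite -(Aut_imset Autb).
case/imsetP=> x Px; rewrite -chiK // => chi_c.
have NSx : chi1 x \in 'N_S(P') := subsetP sP'N _ (imset_f _ Px).
by rewrite (fs_inj FS Fchi NSc NSx chi_c) imset_f in notP'c.
Qed.

Unset Implicit Arguments.
Set Strict Implicit.

Theorem lemma2p5 (gT : finGroupType) (p : nat) (S P Q : {group gT})
  (F : fhoms gT) :
  prime p -> p.-group S -> saturated p S F ->
  P \subset S -> Q <| P -> fully_normalized S F P ->
  (forall xi, F P P xi -> 'C_S(xi @: Q) \subset P) ->
  fully_centralized S F Q.
Proof.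
move=> _ pS satF sPS nsQP fnP centQ; have FS := saturated_fusion satF.
have [sQP nQP] := andP nsQP.
have [R [sRS fnR [f0 Ff0 defR]]] :=
  exists_fully_normalized_conj FS (subset_trans sQP sPS).
apply: (fully_centralized_conj FS (fully_normalized_centralized satF sRS fnR) Ff0 defR).
have sPNQ : P \subset 'N_S(Q) by rewrite subsetI sPS.
have [a /setIdP[Auta _] [chi1 [Fchi1 chi1E]]] :=
  extension_to_normalizer pS satF fnR Ff0 defR sPNQ.
have chi1Q : chi1 @: Q = R.
  by rewrite -[RHS](Aut_imset Auta) -defR -imset_comp; apply: eq_in_imset.
have [_ [psi [Fpsi psiK _]]] := fs_iso FS Fchi1.
pose P' := Group (fs_image_group FS Fchi1).
have FpsiS : F P' S psi := fs_target FS Fpsi sPS (subxx S).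
have [b AFb [chi [Fchi chiE]]] :=
  extension_to_normalizer pS satF fnP FpsiS (imset_inv psiK) (subxx 'N_S(P')).
have chiK : {in P, forall x, chi (chi1 x) = b x}.
  by move=> x Px; rewrite chiE ?imset_f ?psiK.
have := cent_conj_sub_image FS (pgroup_nil pS) nsQP Fchi1 AFb Fchi chiK centQ.
rewrite chi1Q => sCP'.
have psiR : psi @: R = Q by rewrite -chi1Q (imset_inv (sub_in1 (subsetP sQP) psiK)).
rewrite -psiR; apply: (card_cent_image FS FpsiS _ sCP').
by rewrite -chi1Q imsetS.
Qed.
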